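(* Let $X_1,\ldots,X_n$ be independent and uniformly distributed on $\{1,\ldots,n\}$ under $\mathbb{P}$. For a prime $p$ let $Y_p:=\#\{1\le i\le n:p\mid X_i\}$ and $S(k_1,k_2):=\{p\in\mathcal{P}:k_1<p\le k_2\}$. Then for every $\epsilon>0$, for all sufficiently large $k_1\le k_2$ and all sufficiently large $n\ge k_2$, \[ \frac1n\log\mathbb{P}\left(\sum_{p\in S(k_1,k_2)}Y_{p}^{2}>\epsilon n^{2}\right)\leq4\log\log k_{2}+4-\frac{\log(k_{1})}{8}\epsilon. \]
   Context: $\mathcal{P}$ denotes the set of primes. (The paper's displayed statement omits the factor $\frac1n\log$, which its proof establishes.) *)

From mathcomp Require Import all_boot.
From Stdlib Require Import Reals.

Set Implicit Arguments.
Unset Strict Implicit.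
Unset Printing Implicit Defensive.

(* An outcome (X_1,...,X_n) is f : {ffun 'I_n -> 'I_n}, with X_{i+1} = (f i).+1 in {1..n}.
   The uniform product measure gives each of the n^n outcomes mass 1/n^n. *)
Definition outcome (n : nat) := {ffun 'I_n -> 'I_n}.

Definition Y (n p : nat) (f : outcome n) : nat :=
  #|[pred i : 'I_n | p %| (f i).+1]|.

Definition SY (n k1 k2 : nat) (f : outcome n) : nat :=
  \sum_(k1.+1 <= p < k2.+1 | prime p) (Y p f) ^ 2.

Definition big_event (n k1 k2 : nat) (eps : R) : pred (outcome n) :=
  [pred f | if Rlt_dec (eps * INR n * INR n)%R (INR (SY k1 k2 f)) then true else false].

Definition Prob (n : nat) (E : pred (outcome n)) : R :=
  (INR #|E| / INR (n ^ n))%R.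

(* Let f = (X_1, ..., X_n) be uniform in {1..n}^n, Y_p = #{i : p | X_i} and
   S = sum_{k1 < p <= k2, p prime} Y_p^2.  The proof is an exponential
   Markov inequality with lam = ln k1 / 4:
     P(S > eps n^2) <= exp(-lam eps n) * E[prod_p exp(lam Y_p^2 / n)].
   (1) Elementary Chebyshev: the primes of (m, 2m] divide C(2m, m) <= 4^m;
       summing over dyadic blocks gives the Mertens-type bound
       sum_{p <= x} 1/p <= 9 + 2 ln ln x.
   (2) Since Y_p <= n and 4 lam <= ln p, exp(lam Y_p^2/n) <= 2^Y_p + 8^-n p^Y_p.
   (3) Moments of products: expanding prod_p (a_p c_p^Y_p + d_p^Y_p) over
       subsets and using independence of the n draws, every E[prod_p c_p^Y_p]
       is at most prod_p (1 + (c_p - 1)/p)^n, because a product of distinct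
       primes d divides at most n/d numbers of {1..n}.
   (4) Hence E[...] <= prod_p (4^-n + (1 + 1/p)^n) <= 2^#primes exp(n sum 1/p)
       <= exp(n (11 + 2 ln ln k2)), and the theorem follows once
       ln k1 * eps >= 56, i.e. for k1 large enough.
   The development uses MathComp's algebra on the standard library's reals R
   and lives in a module, so that MathComp's ring notations do not capture the
   %R scope of the final statement, which is stated after it. *)
From mathcomp Require Import all_boot.
From Stdlib Require Import Reals Lra.
From mathcomp Require all_order all_algebra Rstruct ring lra zify.

Module PrimeSquareSums.
Import ssreflect ssrnat div prime bigop.
Import all_order all_algebra Rstruct ring lra zify.
Import Order.TTheory GRing.Theory Num.Theory.
Set Implicit Arguments. Unset Strict Implicit. Unset Printing Implicit Defensive.

(* The definitions use the standard library's power on nat. *)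
Lemma natpowE m n : Nat.pow m n = expn m n.
Proof. by elim: n => [|n IH] //=; rewrite expnS IH. Qed.

Lemma prime_ndvd_fact p m : prime p -> m < p -> ~~ (p %| m`!).
Proof.
move=> pp; elim: m => [|m IH] lt_mp.
  by rewrite fact0 dvdn1; apply/eqP=> p1; rewrite p1 in pp.
rewrite factS Euclid_dvdM // negb_or IH ?andbT; last exact: ltnW.
by apply/negP=> /dvdn_leq -/(_ isT); rewrite leqNgt lt_mp.
Qed.

Lemma prod_primes_dvd (s : seq nat) (P : pred nat) m :
  uniq s -> (forall p, p \in s -> P p -> prime p && (p %| m)) ->
  \prod_(p <- s | P p) p %| m.
Proof.
elim: s => [|a s IH] /=; first by rewrite big_nil dvd1n.
move=> /andP[a_notin_s uniq_s] H; rewrite big_cons.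
have dvd_s : \prod_(p <- s | P p) p %| m.
  by apply: IH => // p ps; apply: H; rewrite inE ps orbT.
case Pa: (P a) => //.
have /andP[pr_a a_dvd] := H a (mem_head _ _) Pa.
rewrite Gauss_dvd ?a_dvd ?dvd_s //.
rewrite big_seq_cond; apply: (big_ind (coprime a)) => [||p /andP[ps Pp]].
- exact: coprimen1.
- by move=> x y; rewrite coprimeMr => -> ->.
have /andP[pr_p _] : prime p && (p %| m) by apply: H => //; rewrite inE ps orbT.
rewrite prime_coprime // dvdn_prime2 //; apply/eqP => eq_ap.
by rewrite eq_ap ps in a_notin_s.
Qed.

Lemma count_multiples n d : 0 < d -> \sum_(x < n) (d %| x.+1 : nat) = n %/ d.
Proof.
move=> d0; elim: n => [|n IH]; first by rewrite big_ord0 div0n.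
by rewrite big_ord_recr /= IH divnS // addnC.
Qed.

(* The central binomial coefficient is one term of (1 + 1)^(2m). *)
Lemma central_binomial_le m : 'C(m.*2, m) <= 4 ^ m.
Proof.
have -> : 4 ^ m = \sum_(i < m.*2.+1) 'C(m.*2, i).
  rewrite -[4]/(2 ^ 2) -expnM mul2n -[2]/(1 + 1) expnDn.
  by apply: eq_bigr => i _; rewrite !exp1n !muln1.
have hm : m < m.*2.+1 by rewrite ltnS -addnn leq_addr.
by rewrite (bigD1 (Ordinal hm)) //= leq_addr.
Qed.

(* Chebyshev: the primes of (m, 2m] all divide C(2m, m), so their product
   is at most 4^m. *)
Lemma prod_primes_mid_le m : \prod_(m.+1 <= p < m.*2.+1 | prime p) p <= 4 ^ m.
Proof.
apply: leq_trans (central_binomial_le m).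
apply: dvdn_leq; first by rewrite bin_gt0 -addnn leq_addr.
apply: prod_primes_dvd; first exact: iota_uniq.
move=> p; rewrite mem_index_iota => /andP[lo hi] pp; rewrite pp /=.
have := bin_fact (leq_addr m m); rewrite addnK addnn => fact_eq.
have : p %| m.*2`! by apply: dvdn_fact; rewrite -addnn in hi *; lia.
by rewrite -fact_eq !Euclid_dvdM // (negbTE (prime_ndvd_fact pp lo)) !orbF.
Qed.

Lemma count_primes_dyadic t : 0 < t ->
  t * count prime (index_iota (2 ^ t).+1 ((2 ^ t).*2.+1)) <= (2 ^ t).*2.
Proof.
move=> t0; set c := count _ _.
have : (2 ^ t) ^ c <= 4 ^ (2 ^ t).
  apply: leq_trans (prod_primes_mid_le (2 ^ t)).
  rewrite -[X in X <= _]iter_muln_1 -big_const_seq.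
  rewrite big_seq_cond [X in _ <= X]big_seq_cond.
  apply: leq_prod => p /andP[]; rewrite mem_index_iota => /andP[lo _] _.
  exact: ltnW.
rewrite -expnM -[4]/(2 ^ 2) -expnM mul2n.
by rewrite leq_exp2l.
Qed.

Local Open Scope ring_scope.
Bind Scope ring_scope with R.

Lemma ln_lt (x y : R) : 0 < x -> x < y -> ln x < ln y.
Proof. by move=> /RltP x0 /RltP xy; apply/RltP; apply: ln_increasing. Qed.

Lemma ln_le (x y : R) : 0 < x -> x <= y -> ln x <= ln y.
Proof. by move=> x0; rewrite le_eqVlt => /orP[/eqP->//|/(ln_lt x0)/ltW]. Qed.

Lemma ln_ge0 (x : R) : 1 <= x -> 0 <= ln x.
Proof. by move=> x1; rewrite (_ : 0 = ln 1); [apply: ln_le | exact/esym/ln_1]. Qed.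

Lemma exp_le (x y : R) : x <= y -> exp x <= exp y.
Proof.
rewrite le_eqVlt => /orP[/eqP->//|/RltP xy].
by apply/ltW/RltP; apply: exp_increasing.
Qed.

Lemma exp_gt0 (x : R) : 0 < exp x.
Proof. by apply/RltP; apply: exp_pos. Qed.

Lemma one_add_le_exp (x : R) : 1 + x <= exp x.
Proof. by have /RleP := exp_ineq1_le x. Qed.

Lemma ln_le_subr1 (y : R) : 0 < y -> ln y <= y - 1.
Proof.
move=> y0; have := one_add_le_exp (ln y).
by rewrite exp_ln; [lra | exact/RltP].
Qed.

Lemma ln2_lt1 : ln 2 < 1.
Proof.
have /RltP h := exp_ineq1 1 R1_neq_R0.
by rewrite -[X in _ < X](ln_exp 1); apply: ln_lt.
Qed.

Lemma ln2_gt_half : 2^-1 < ln 2.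
Proof. by have /RltP := ln_lt_2; rewrite RinvE IZRposE INRE. Qed.

(* From exp 1 <= 3: ln k >= 1 for k >= 3. *)
Lemma ln_nat_ge1 (k : nat) : (3 <= k)%N -> 1 <= ln (k%:R : R).
Proof.
move=> k3; have /RleP e3 := exp_le_3.
rewrite -[X in X <= _](ln_exp 1); apply: ln_le; first exact: exp_gt0.
by apply: (le_trans e3); rewrite IZRposE INRE ler_nat.
Qed.

Lemma ln_natX (a n : nat) : (0 < a)%N -> ln ((a ^ n)%:R : R) = n%:R * ln a%:R.
Proof.
by move=> a0; rewrite natrX -RpowE ln_pow ?INRE //; apply/RltP; rewrite ltr0n.
Qed.

Lemma exp_natmul_ln (a : R) m : 0 < a -> exp (m%:R * ln a) = a ^+ m.
Proof.
move=> a0; rewrite -[RHS]exp_ln; last by apply/RltP; rewrite exprn_gt0.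
by congr exp; rewrite -RpowE ln_pow ?INRE //; apply/RltP.
Qed.

Lemma exp_sum (I : Type) (r : seq I) (P : pred I) (F : I -> R) :
  exp (\sum_(i <- r | P i) F i) = \prod_(i <- r | P i) exp (F i).
Proof. exact: (big_morph exp exp_plus exp_0). Qed.

Definition prime_recip_sum (x : nat) : R :=
  \sum_(0 <= p < x.+1 | prime p) (p%:R)^-1.
Definition prime_recip_block (t : nat) : R :=
  \sum_((2 ^ t).+1 <= p < (2 ^ t).*2.+1 | prime p) (p%:R)^-1.

Lemma prime_recip_sum_split t :
  prime_recip_sum (2 ^ t.+1) = prime_recip_sum (2 ^ t) + prime_recip_block t.
Proof.
rewrite /prime_recip_sum /prime_recip_block expnS mul2n.
by rewrite (@big_cat_nat _ _ _ (2 ^ t).+1) // ltnS -addnn leq_addr.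
Qed.

Lemma prime_recip_sum_mono x y : (x <= y)%N -> prime_recip_sum x <= prime_recip_sum y.
Proof.
move=> xy; rewrite /prime_recip_sum [X in _ <= X](@big_cat_nat _ _ _ x.+1) //=.
by rewrite lerDl; apply: sumr_ge0 => i _; rewrite invr_ge0 ler0n.
Qed.

(* Each of the at most 2^(t+1)/t primes of the block exceeds 2^t. *)
Lemma prime_recip_block_le t : (0 < t)%N -> prime_recip_block t <= 2 / t%:R.
Proof.
move=> t0; set X : R := (2 ^ t)%:R.
have X0 : 0 < X by rewrite ltr0n expn_gt0.
have t0' : 0 < (t%:R : R) by rewrite ltr0n.
apply: (@le_trans _ _ (\sum_((2 ^ t).+1 <= p < (2 ^ t).*2.+1 | prime p) X^-1)).
  rewrite /prime_recip_block big_seq_cond [X in _ <= X]big_seq_cond; apply: ler_sum => p /andP[].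
  rewrite mem_index_iota => /andP[lo _] _.
  rewrite lef_pV2 ?posrE ?ltr0n ?expn_gt0 //; last exact: leq_trans lo.
  by rewrite ler_nat ltnW.
rewrite big_const_seq iter_addr addr0 -[X in X <= _]mulr_natl.
have := count_primes_dyadic t0; rewrite -(ler_nat R) natrM => h.
rewrite ler_pdivlMr // mulrAC ler_pdivrMr // mulrC.
by apply: le_trans h _; rewrite -mul2n natrM /X; lra.
Qed.

(* 1/(t+1) <= ln (t+1) - ln t, from ln y <= y - 1 at y = t/(t+1). *)
Lemma recip_le_ln_step t : (0 < t)%N -> (t.+1%:R)^-1 <= ln (t.+1%:R : R) - ln t%:R.
Proof.
move=> t0.
have t0' : 0 < (t%:R : R) by rewrite ltr0n.
have t1' : 0 < (t.+1%:R : R) by rewrite ltr0n.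
have h := ln_le_subr1 (divr_gt0 t0' t1').
have ln_div : ln (t%:R / t.+1%:R) = ln t%:R - ln t.+1%:R.
  rewrite -RdivE /Rdiv ln_mult ?ln_Rinv //; try exact/RltP.
  by apply/RltP; rewrite RinvE invr_gt0.
have div_sub : (t%:R / t.+1%:R - 1 : R) = - (t.+1%:R)^-1.
  by rewrite -[t.+1]addn1 natrD; field; apply: lt0r_neq0; lra.
by rewrite -opprB lerNr -div_sub -ln_div.
Qed.

(* Telescoping the dyadic blocks: T(2^(t+1)) + 2/(t+1) <= 5/2 + 2 ln (t+1). *)
Lemma prime_recip_sum_pow2 t :
  prime_recip_sum (2 ^ t.+1) + 2 / t.+1%:R <= 5/2 + 2 * ln t.+1%:R.
Proof.
elim: t => [|t IH].
  rewrite /prime_recip_sum expn1 big_mkcond /= !big_nat_recr //= big_geq //=.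
  rewrite (_ : ln 1 = 0); [lra | exact: ln_1].
rewrite prime_recip_sum_split.
have := prime_recip_block_le (ltn0Sn t); have := recip_le_ln_step (ltn0Sn t).
move: IH; set a := prime_recip_sum _; set b := prime_recip_block _.
set c := ln t.+1%:R; set d := ln t.+2%:R; set e := t.+1%:R^-1; set f := t.+2%:R^-1.
move=> *; lra.
Qed.

(* With t = log2 x >= 1 we have t + 1 <= 2 t <= 4 ln x. *)
Lemma log2_succ_le_ln x : (2 <= x)%N -> ((trunc_log 2 x).+1%:R : R) <= 4 * ln x%:R.
Proof.
move=> x2; set t := trunc_log 2 x.
have t1 : 1 <= (t%:R : R) by rewrite ler1n trunc_log_gt0.
have tx : t%:R * ln 2 <= ln (x%:R : R).
  rewrite -ln_natX //; apply: ln_le; rewrite ?ltr0n ?expn_gt0 // ler_nat.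
  by apply: trunc_logP; lia.
have : t%:R * 2^-1 <= t%:R * ln 2 by rewrite ler_wpM2l ?ler0n // ltW ?ln2_gt_half.
rewrite -[t.+1%:R]natr1; move: t1 tx; set u := (t%:R : R); set L := ln (x%:R : R).
move=> *; lra.
Qed.

Lemma prime_recip_sum_le x : (2 <= x)%N -> prime_recip_sum x <= 9 + 2 * ln (ln x%:R).
Proof.
move=> x2; set t := trunc_log 2 x.
have x_lt : (x <= 2 ^ t.+1)%N by apply/ltnW/trunc_log_ltn.
have ln_x_pos : 0 < ln (x%:R : R).
  have ln2_le : ln 2 <= ln (x%:R : R) by apply: ln_le; rewrite ?ler_nat.
  have := ln2_gt_half; move=> *; lra.
have ln_t : ln (t.+1%:R : R) <= ln 4 + ln (ln x%:R).
  have -> : ln 4 + ln (ln x%:R) = ln (4 * ln x%:R).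
    by symmetry; apply: ln_mult; apply/RltP; rewrite ?ln_x_pos ?ltr0n.
  by apply: ln_le; rewrite ?ltr0n ?log2_succ_le_ln.
have ln4 : ln 4 <= 4 - 1 by apply: ln_le_subr1.
have mono := prime_recip_sum_mono x_lt; have pow2 := prime_recip_sum_pow2 t.
have : 0 <= 2 / (t.+1%:R : R) by rewrite divr_ge0 ?ler0n.
move: ln_t mono pow2; set l := ln t.+1%:R; set r := 2 / t.+1%:R.
move=> *; lra.
Qed.

(* If 4 lam <= ln p and m <= n then exp(lam m^2/n) <= 2^m + 8^-n p^m:
   when lam m <= n ln 2 the first term dominates, otherwise the exponent
   lam m^2/n <= lam m <= m ln p - 3 n ln 2 is controlled by the second. *)
Lemma exp_square_le (lam p : R) (m n : nat) : (0 < n)%N -> (m <= n)%N -> 0 <= lam ->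
  1 < p -> 4 * lam <= ln p ->
  exp (lam * m%:R ^+ 2 / n%:R) <= 2 ^+ m + (8^-1) ^+ n * p ^+ m.
Proof.
move=> n0 mn lam0 p1 lp.
set M : R := m%:R; set N : R := n%:R.
have N0 : 0 < N by rewrite ltr0n.
have M0 : 0 <= M by rewrite ler0n.
have MN : M <= N by rewrite ler_nat.
set A := lam * M.
have A0 : 0 <= A by apply: mulr_ge0.
have p0 : 0 < p by apply: lt_trans p1.
have second_ge0 : 0 <= (8^-1) ^+ n * p ^+ m.
  by apply: mulr_ge0; rewrite exprn_ge0 // ?invr_ge0 // ltW.
have [small | large] := leP A (N * ln 2).
  apply: (@le_trans _ _ (2 ^+ m)); last by rewrite lerDl.
  rewrite -(@exp_natmul_ln 2 m) //; apply: exp_le.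
  have -> : lam * M ^+ 2 / N = M * (A / N).
    by rewrite /A expr2; field; apply: lt0r_neq0.
  by apply: ler_wpM2l => //; rewrite ler_pdivrMr // mulrC.
apply: (@le_trans _ _ (exp (M * ln p + N * ln (8^-1)))); last first.
  rewrite exp_plus RmultE exp_natmul_ln // exp_natmul_ln ?invr_gt0 // [X in X <= _]mulrC.
  by apply: ler_wpDl; rewrite ?exprn_ge0.
apply: exp_le.
have -> : lam * M ^+ 2 / N = A * (M / N).
  by rewrite /A expr2; field; apply: lt0r_neq0.
have shrink : A * (M / N) <= A by apply: ler_piMr => //; rewrite ler_pdivrMr // mul1r.
have ln8 : ln (8^-1 : R) = - (3%:R * ln 2).
  by rewrite -RinvE ln_Rinv -?ln_natX //; apply/RltP.
have lamM : 4 * A <= M * ln p.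
  by rewrite (_ : 4 * A = M * (4 * lam)) ?ler_wpM2l // /A; ring.
rewrite ln8; move: large shrink lamM.
set B := A * (M / N); set LP := M * ln p; set N2 := N * ln 2.
have -> : N * - (3%:R * ln 2) = - (3%:R * N2) by rewrite /N2; ring.
move=> *; lra.
Qed.

Section PrimeFamily.
Variables (I : finType) (pv : I -> nat).
Hypothesis pv_inj : injective pv.
Hypothesis pv_prime : forall q, prime (pv q).

Lemma prod_family_dvd (J : {set I}) m :
  (forall q, q \in J -> (pv q %| m)%N) -> (\prod_(q in J) pv q %| m)%N.
Proof.
move=> J_dvd.
have -> : (\prod_(q in J) pv q = \prod_(p <- map pv (enum J)) p)%N.
  by rewrite big_map big_enum.
apply: (@prod_primes_dvd _ predT); first by rewrite (map_inj_uniq pv_inj) enum_uniq.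
by move=> p /mapP[q qJ ->] _; rewrite pv_prime J_dvd // -mem_enum.
Qed.

(* The x in 1..n divisible by every prime of J are the multiples of their
   product d, so there are at most n/d of them. *)
Lemma count_common_multiples_le (J : {set I}) n :
  \sum_(x < n) \prod_(q in J) ((pv q %| x.+1)%N%:R : R)
     <= n%:R / (\prod_(q in J) pv q)%N%:R.
Proof.
set d := (\prod_(q in J) pv q)%N.
have d0 : (0 < d)%N by apply: prodn_gt0 => q; exact: prime_gt0.
apply: (@le_trans _ _ (\sum_(x < n) (((d %| x.+1)%N : nat)%:R : R))).
  apply: ler_sum => x _; case dvd_x: (d %| x.+1)%N.
    by apply: prodr_ile1 => q _; rewrite ler0n /= -[1]/(1%:R) ler_nat leq_b1.
  have : ~~ [forall q in J, (pv q %| x.+1)%N].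
    apply: contraFN dvd_x => /forall_inP J_dvd; exact: prod_family_dvd.
  rewrite negb_forall_in => /exists_inP[q qJ nq].
  by rewrite (bigD1 q) //= (negbTE nq) mul0r.
rewrite -natr_sum count_multiples // ler_pdivlMr ?ltr0n // -natrM ler_nat.
exact: leq_divM.
Qed.

(* One uniform draw x in 1..n: the mean of prod_{q | x} c_q is at most
   prod_q (1 + (c_q - 1)/q), by expanding c_q = (c_q - 1) + 1 over subsets. *)
Lemma one_draw_moment_le (c : I -> R) n : (forall q, 1 <= c q) ->
  \sum_(x < n) \prod_q (if (pv q %| x.+1)%N then c q else 1)
    <= n%:R * \prod_q (1 + (c q - 1) / (pv q)%:R).
Proof.
move=> c1.
have expand (x : 'I_n) : \prod_q (if (pv q %| x.+1)%N then c q else 1)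
    = \sum_(J : {set I}) \prod_(q in J) ((c q - 1) * ((pv q %| x.+1)%N%:R)).
  rewrite (eq_bigr (fun q => (c q - 1) * ((pv q %| x.+1)%N%:R) + 1)); last first.
    by move=> q _; case: (pv q %| x.+1)%N; rewrite /= ?mulr1 ?mulr0 ?add0r ?subrK.
  by rewrite bigA_distr; apply: eq_bigr => J _; rewrite [RHS]big_mkcond.
rewrite (eq_bigr _ (fun x _ => expand x)) exchange_big /=.
apply: (@le_trans _ _ (\sum_(J : {set I}) \prod_(q in J) (c q - 1) *
     (n%:R / (\prod_(q in J) pv q)%N%:R))).
  apply: ler_sum => J _; rewrite (eq_bigr _ (fun x _ => big_split _ _ _ _ _)) /=.
  rewrite -mulr_sumr; apply: ler_wpM2l; last exact: count_common_multiples_le.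
  by apply: prodr_ge0 => q _; rewrite subr_ge0.
rewrite (eq_bigr (fun q => (c q - 1) / (pv q)%:R + 1)); last by move=> q _; rewrite addrC.
rewrite bigA_distr mulr_sumr; apply: ler_sum => J _.
by rewrite -big_mkcond prodf_div natr_prod mulrCA.
Qed.

(* Independence of the n draws: the mean over f of prod_q c_q^(Y_q f)
   is the n-th power of the one-draw mean. *)
Lemma product_moment_le (c : I -> R) n : (forall q, 1 <= c q) ->
  \sum_(f : outcome n) \prod_q c q ^+ Y (pv q) f
   <= n%:R ^+ n * \prod_q (1 + (c q - 1) / (pv q)%:R) ^+ n.
Proof.
move=> c1.
set g := fun x : 'I_n => \prod_q (if (pv q %| x.+1)%N then c q else 1).
have by_draw (f : outcome n) : \prod_q c q ^+ Y (pv q) f = \prod_(i < n) g (f i).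
  rewrite /g exchange_big /=; apply: eq_bigr => q _.
  rewrite /Y -prodr_const big_mkcond /=; apply: eq_bigr => i _.
  by rewrite inE.
rewrite (eq_bigr _ (fun f _ => by_draw f)).
rewrite -(bigA_distr_bigA (fun (i : 'I_n) (x : 'I_n) => g x)) /=.
rewrite prodr_const card_ord prodrXl -exprMn.
have g0 : 0 <= \sum_(x < n) g x.
  apply: sumr_ge0 => x _; apply: prodr_ge0 => q _.
  by case: (_ %| _)%N => //; exact: le_trans (c1 q).
apply: lerXn2r; rewrite ?nnegrE //; last exact: one_draw_moment_le.
apply: mulr_ge0; first exact: ler0n.
apply: prodr_ge0 => q _; apply: addr_ge0 => //.
by apply: divr_ge0; rewrite ?subr_ge0 ?ler0n.
Qed.

(* Mixed moments: expanding prod_q (a_q c_q^Y_q + d_q^Y_q) over the subsets J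
   of indices taking the first summand reduces to product_moment_le. *)
Lemma mixed_moment_le (a c d : I -> R) n :
  (forall q, 0 <= a q) -> (forall q, 1 <= c q) -> (forall q, 1 <= d q) ->
  \sum_(f : outcome n) \prod_q (a q * c q ^+ Y (pv q) f + d q ^+ Y (pv q) f)
   <= n%:R ^+ n * \prod_q (a q * (1 + (c q - 1) / (pv q)%:R) ^+ n
                           + (1 + (d q - 1) / (pv q)%:R) ^+ n).
Proof.
move=> a0 c1 d1.
set w := fun (J : {set I}) q => if q \in J then a q else 1.
set cd := fun (J : {set I}) q => if q \in J then c q else d q.
have expand (f : outcome n) :
    \prod_q (a q * c q ^+ Y (pv q) f + d q ^+ Y (pv q) f) =
    \sum_(J : {set I}) (\prod_q w J q * \prod_q cd J q ^+ Y (pv q) f).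
  rewrite bigA_distr; apply: eq_bigr => J _; rewrite -big_split.
  by apply: eq_bigr => q _; rewrite /w /cd /=; case: (q \in J); rewrite ?mul1r.
rewrite (eq_bigr _ (fun f _ => expand f)) exchange_big /=.
apply: (@le_trans _ _ (\sum_(J : {set I}) (\prod_q w J q *
     (n%:R ^+ n * \prod_q (1 + (cd J q - 1) / (pv q)%:R) ^+ n)))).
  apply: ler_sum => J _; rewrite -mulr_sumr; apply: ler_wpM2l.
    by apply: prodr_ge0 => q _; rewrite /w; case: (_ \in _).
  by apply: product_moment_le => q; rewrite /cd; case: (_ \in _).
rewrite bigA_distr mulr_sumr; apply: ler_sum => J _.
rewrite mulrCA -big_split /=; apply: ler_wpM2l; first by rewrite exprn_ge0 ?ler0n.
apply: ler_prod => q _; rewrite /w /cd /=.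
have moment_ge0 (b : R) : 1 <= b -> 0 <= (1 + (b - 1) / (pv q)%:R) ^+ n.
  by move=> b1; rewrite exprn_ge0 // addr_ge0 ?divr_ge0 ?subr_ge0 ?ler0n.
by case: (q \in J); rewrite ?mul1r lexx andbT ?mulr_ge0 ?moment_ge0.
Qed.

(* Combining exp_square_le with mixed_moment_le (a = 8^-n, c = q, d = 2):
   the exponential moment of lam sum_q Y_q^2 / n when 4 lam <= ln q. *)
Lemma exp_square_moment_le (lam : R) n : (0 < n)%N -> 0 <= lam ->
  (forall q, 4 * lam <= ln (pv q)%:R) ->
  \sum_(f : outcome n) \prod_q exp (lam * (Y (pv q) f)%:R ^+ 2 / n%:R)
   <= n%:R ^+ n * \prod_q ((4^-1) ^+ n + (1 + (pv q)%:R^-1) ^+ n).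
Proof.
move=> n0 lam0 lam_le.
have p1 q : 1 < ((pv q)%:R : R) by rewrite ltr1n prime_gt1.
apply: (@le_trans _ _ (\sum_(f : outcome n) \prod_q
   ((8^-1) ^+ n * (pv q)%:R ^+ Y (pv q) f + 2 ^+ Y (pv q) f))).
  apply: ler_sum => f _; apply: ler_prod => q _.
  rewrite ltW ?exp_gt0 //= addrC; apply: exp_square_le => //.
  by rewrite /Y; apply: leq_trans (max_card _) _; rewrite card_ord.
apply: le_trans
  (@mixed_moment_le (fun=> 8^-1 ^+ n) (fun q => (pv q)%:R) (fun=> 2) n _ _ _) _.
- by move=> q; rewrite exprn_ge0 ?invr_ge0.
- by move=> q; exact: ltW.
- by move=> q; rewrite ler1n.
apply: ler_wpM2l; first by rewrite exprn_ge0 ?ler0n.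
apply: ler_prod => q _; set P := ((pv q)%:R : R).
have P0 : 0 < P := lt_trans ltr01 (p1 q).
have frac_ge0 : 0 <= (P - 1) / P by rewrite divr_ge0 ?subr_ge0 ?ltW ?p1.
have frac_le1 : (P - 1) / P <= 1 by rewrite ler_pdivrMr // mul1r lerBlDr lerDl.
rewrite (_ : (2 : R) - 1 = 1) ?div1r; last by rewrite -[2]natr1 addrK.
rewrite lerD2r -exprMn; apply/andP; split.
  by rewrite addr_ge0 ?exprn_ge0 ?mulr_ge0 ?addr_ge0 ?invr_ge0 ?(ltW P0).
by apply: lerXn2r; rewrite ?nnegrE; lra.
Qed.
End PrimeFamily.

(* Each factor 4^-n + (1 + 1/q)^n is at most 1 + exp(n/q) <= 2 exp(n/q). *)
Lemma moment_factors_le (I : finType) (pv : I -> nat) n :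
  \prod_q ((4^-1) ^+ n + (1 + (pv q)%:R^-1) ^+ n)
     <= 2 ^+ #|I| * exp (n%:R * \sum_q ((pv q)%:R : R)^-1).
Proof.
rewrite mulr_sumr exp_sum -prodr_const -big_split /=; apply: ler_prod => q _.
have x0 : 0 <= ((pv q)%:R : R)^-1 by rewrite invr_ge0 ler0n.
have b1 : 1 <= (1 + (pv q)%:R^-1) ^+ n :> R by apply: exprn_ege1; lra.
have a1 : (4^-1 : R) ^+ n <= 1 by apply: exprn_ile1; lra.
have a0 : 0 <= (4^-1 : R) ^+ n by apply: exprn_ge0; lra.
have b_le : (1 + (pv q)%:R^-1) ^+ n <= exp (n%:R * (pv q)%:R^-1).
  rewrite mulr_natl -expRX; apply: lerXn2r; rewrite ?nnegrE ?one_add_le_exp //.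
    by rewrite addr_ge0.
  exact: ltW (exp_gt0 _).
move: b1 a1 a0 b_le; set A := (4^-1 : R) ^+ n; set B := (1 + _) ^+ n; set C := exp _.
move=> *; apply/andP; split; lra.
Qed.

(* 2^m <= exp(2n) whenever m <= n + 1 and n >= 1, as ln 2 < 1. *)
Lemma two_pow_le_exp m n : (0 < n)%N -> (m <= n.+1)%N -> 2 ^+ m <= exp (2 * n%:R).
Proof.
move=> n0 mn; apply: (@le_trans _ _ (2 ^+ n.+1)); first by rewrite ler_eXn2l // ltr1n.
rewrite -exp_natmul_ln //; apply: exp_le.
have : n.+1%:R * ln 2 <= (n.+1%:R : R) by rewrite ler_piMr ?ler0n // ltW ?ln2_lt1.
have : 1 <= (n%:R : R) by rewrite ler1n.
rewrite -[n.+1%:R]natr1; move: (n%:R : R) (ln 2) => N l; lra.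
Qed.

Lemma card_mul_le_sum (T : finType) (E : pred T) (g : T -> R) (b : R) :
  (forall x, 0 <= g x) -> (forall x, E x -> b <= g x) -> #|E|%:R * b <= \sum_x g x.
Proof.
move=> g0 gE; rewrite mulr_natl -sumr_const [X in _ <= X](bigID (mem E)) /=.
apply: ler_wpDr; first exact: sumr_ge0.
by apply: ler_sum => x; exact: gE.
Qed.

Lemma div_le_exp (E D x y z : R) :
  0 < D -> E * exp x <= D * exp y -> y - x <= z -> E / D <= exp z.
Proof.
move=> D0 Exy yxz; rewrite ler_pdivrMr // mulrC.
apply: le_trans (ler_wpM2l (ltW D0) (exp_le yxz)).
by rewrite exp_plus exp_Ropp RmultE RinvE mulrA ler_pdivlMr ?exp_gt0.
Qed.

Section Window.
Variables k1 k2 : nat.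

Definition window_prime : {pred 'I_k2.+1} :=
  [pred p : 'I_k2.+1 | (k1 < p)%N && prime p].
Let WP := {p : 'I_k2.+1 | p \in window_prime}.
Let wval (q : WP) : nat := val q.

Lemma wval_inj : injective wval.
Proof. by move=> a b eq_ab; apply/val_inj/ord_inj. Qed.

Lemma wval_prime q : prime (wval q).
Proof. by have := valP q; rewrite inE => /andP[]. Qed.

Lemma wval_gt q : (k1 < wval q)%N.
Proof. by have := valP q; rewrite inE => /andP[]. Qed.

Lemma card_window : (#|{: WP}| <= k2.+1)%N.
Proof. by rewrite card_sig; apply: leq_trans (max_card _) _; rewrite card_ord. Qed.

Lemma SY_window n (f : outcome n) :
  (SY k1 k2 f)%:R = \sum_(q : WP) (Y (wval q) f)%:R ^+ 2 :> R.
Proof.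
rewrite /SY big_geq_mkord natr_sum.
rewrite (eq_bigl (mem window_prime)); last by move=> p; rewrite !inE andbC.
by rewrite big_sub; apply: eq_bigr => q _; rewrite natpowE natrX.
Qed.

Lemma window_recip_le : \sum_(q : WP) ((wval q)%:R : R)^-1 <= prime_recip_sum k2.
Proof.
rewrite /prime_recip_sum big_mkord.
rewrite -(big_sub window_prime (fun p : 'I_k2.+1 => (p%:R : R)^-1)).
rewrite big_mkcond [X in _ <= X]big_mkcond; apply: ler_sum => p _.
by rewrite inE; case: (k1 < p)%N; case: (prime p); rewrite //= invr_ge0 ler0n.
Qed.

Lemma window_exp_moment_le (lam : R) n : (0 < k1)%N -> (2 <= k2)%N -> (k2 <= n)%N ->
  0 <= lam -> 4 * lam <= ln k1%:R ->
  \sum_(f : outcome n) \prod_(q : WP) exp (lam * (Y (wval q) f)%:R ^+ 2 / n%:R)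
    <= n%:R ^+ n * exp (n%:R * (11 + 2 * ln (ln k2%:R))).
Proof.
move=> k1_gt0 k2_ge2 k2n lam0 lam_le.
have n0 : (0 < n)%N by lia.
have lam_le_p q : 4 * lam <= ln (wval q)%:R.
  apply: (le_trans lam_le); apply: ln_le; rewrite ?ltr0n //.
  by rewrite ler_nat ltnW ?wval_gt.
apply: le_trans (exp_square_moment_le wval_inj wval_prime n0 lam0 lam_le_p) _.
apply: ler_wpM2l; first by rewrite exprn_ge0 ?ler0n.
apply: le_trans (moment_factors_le _ _) _.
have -> : n%:R * (11 + 2 * ln (ln k2%:R)) =
    2 * n%:R + n%:R * (9 + 2 * ln (ln k2%:R)) :> R by ring.
rewrite exp_plus RmultE.
apply: ler_pM; rewrite ?exprn_ge0 ?(ltW (exp_gt0 _)) //.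
  by apply: two_pow_le_exp => //; apply: leq_trans card_window _.
apply: exp_le; rewrite ler_wpM2l ?ler0n //.
exact: le_trans window_recip_le (prime_recip_sum_le k2_ge2).
Qed.

Lemma window_markov (lam eps : R) n : (0 < n)%N -> 0 <= lam ->
  #|@big_event n k1 k2 eps|%:R * exp (lam * eps * n%:R)
    <= \sum_(f : outcome n) \prod_(q : WP) exp (lam * (Y (wval q) f)%:R ^+ 2 / n%:R).
Proof.
move=> n0 lam0; have N0 : 0 < (n%:R : R) by rewrite ltr0n.
apply: card_mul_le_sum => [f | f]; first by apply: prodr_ge0 => q _; exact/ltW/exp_gt0.
rewrite /big_event /=; case: Rlt_dec => // lt_SY _.
move/RltP: lt_SY; rewrite !INRE !RmultE SY_window => large.
rewrite -exp_sum -mulr_suml -mulr_sumr; apply: exp_le.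
by rewrite -!mulrA ler_wpM2l // ler_pdivlMr // ltW.
Qed.

Lemma window_bound eps n : (0 < k1)%N -> (3 <= k2)%N -> (k2 <= n)%N ->
  56 <= ln k1%:R * eps ->
  #|@big_event n k1 k2 eps|%:R / (n ^ n)%N%:R
    <= exp (n%:R * (4 * ln (ln k2%:R) + 4 - ln k1%:R / 8 * eps)).
Proof.
move=> k1_gt0 k2_ge3 k2n large_eps.
have n0 : (0 < n)%N by lia.
set L1 := ln (k1%:R : R); set L2 := ln (ln (k2%:R : R)).
have lam0 : 0 <= L1 / 4 by rewrite divr_ge0 // ln_ge0 // ler1n.
have lam_le : 4 * (L1 / 4) <= L1 by lra.
have L2_ge0 : 0 <= L2 := ln_ge0 (ln_nat_ge1 k2_ge3).
apply: (@div_le_exp _ _ (L1 / 4 * eps * n%:R) (n%:R * (11 + 2 * L2))).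
- by rewrite natrX exprn_gt0 ?ltr0n.
- rewrite natrX; apply: le_trans (window_markov eps n0 lam0) _.
  exact: window_exp_moment_le k1_gt0 (ltnW k2_ge3) k2n lam0 lam_le.
have -> : n%:R * (11 + 2 * L2) - L1 / 4 * eps * n%:R =
    n%:R * (11 + 2 * L2 - (L1 * eps) / 4) by ring.
have -> : n%:R * (4 * L2 + 4 - L1 / 8 * eps) =
    n%:R * (4 + 4 * L2 - (L1 * eps) / 8) by ring.
rewrite ler_wpM2l ?ler0n //; move: large_eps; set a := L1 * eps => *; lra.
Qed.
End Window.

(* Choosing k1 >= exp(56 / eps) makes ln k1 * eps >= 56. *)
Lemma eventual_bound (eps : R) : 0 < eps -> exists K : nat, forall k1 k2 : nat,
  (K <= k1)%N -> (k1 <= k2)%N -> forall n : nat, (k2 <= n)%N ->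
  #|@big_event n k1 k2 eps|%:R / (n ^ n)%N%:R
    <= exp (n%:R * (4 * ln (ln k2%:R) + 4 - ln k1%:R / 8 * eps)).
Proof.
move=> eps0; have [m /RltP] := INR_unbounded (exp (56 / eps)); rewrite INRE => m_large.
exists (maxn 3 m) => k1 k2; rewrite geq_max => /andP[k1_ge3 m_le] k12 n k2n.
apply: window_bound => //; try lia.
have k1_large : exp (56 / eps) < k1%:R by apply: lt_le_trans m_large _; rewrite ler_nat.
have := ln_lt (exp_gt0 _) k1_large; rewrite ln_exp => /ltW.
by rewrite ler_pdivrMr.
Qed.
End PrimeSquareSums.

Theorem lemma3p6 :
  forall eps : R, (0 < eps)%R ->
  exists K : nat, forall k1 k2 : nat, (K <= k1)%N -> (k1 <= k2)%N ->
  exists N : nat, forall n : nat, (N <= n)%N -> (k2 <= n)%N ->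
    (Prob (@big_event n k1 k2 eps)
     <= exp (INR n * (4 * ln (ln (INR k2)) + 4 - ln (INR k1) / 8 * eps)))%R.
Proof.
move=> eps /Rstruct.RltP eps0; have [K bound] := PrimeSquareSums.eventual_bound eps0.
exists K => k1 k2 k1K k12; exists 0%N => n _ k2n.
apply/Rstruct.RleP; rewrite /Prob PrimeSquareSums.natpowE !Rstruct.RealsE.
exact: bound.
Qed.
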